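(* Let $\alpha,\gamma$ be weak compositions. The following are equivalent: (1) $\mathsf{rajcode}(\alpha)=\mathsf{rajcode}(\gamma)$; (2) $\mathsf{dark}(\alpha)=\mathsf{dark}(\gamma)$; (3) the underlying diagrams (ignoring labels) of $\mathsf{snow}(D(\alpha))$ and $\mathsf{snow}(D(\gamma))$ are equal.
   Context: A weak composition is an infinite sequence of nonnegative integers with finitely many positive entries; $D(\alpha)=\{(r,c):1\le c\le\alpha_r\}$ where $(r,c)$ is the cell in row $r$ (row 1 on top), column $c$. For a diagram $D$ (finite subset of $\mathbb{Z}_{>0}^2$), $\mathsf{snow}(D)$ is built by iterating through rows from bottom to top: in row $r$, take the rightmost cell $(r,c)\in D$ such that column $c$ contains no dark cloud yet; if it exists label it a dark cloud and add snowflake cells at $(r',c)$ for all $r'<r$ with $(r',c)\notin D$. $\mathsf{dark}(D)$ is the set of dark-cloud cells, $\mathsf{rajcode}(D)$ is the weak composition whose $i$-th entry is the number of cells of $\mathsf{snow}(D)$ in row $i$; $\mathsf{rajcode}(\alpha)=\mathsf{rajcode}(D(\alpha))$, $\mathsf{dark}(\alpha)=\mathsf{dark}(D(\alpha))$. *)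

From mathcomp Require Import all_boot.
Set Implicit Arguments. Unset Strict Implicit. Unset Printing Implicit Defensive.

(* A diagram is a finite set of cells (r, c), represented as a list (read as a
   set via membership); row 1 is the top row.  A weak composition is a finite
   list of nat: entry r (1-indexed) is [nth 0 alpha r.-1]; all further entries
   are 0 (trailing zeros are immaterial). *)
Definition cell := (nat * nat)%type.
Definition diagram := seq cell.

Definition Dcomp (alpha : seq nat) : diagram :=
  flatten [seq [seq (r, c) | c <- iota 1 (nth 0 alpha r.-1)] | r <- iota 1 (size alpha)].

Definition maxrow (D : diagram) : nat := \max_(p <- D) p.1.

Definition dark_step (D : diagram) (dk : seq cell) (r : nat) : seq cell :=
  let cands := [seq p.2 | p <- D & (p.1 == r) && (p.2 \notin [seq q.2 | q <- dk])] in
  if cands is [::] then dk else (r, \max_(c <- cands) c) :: dk.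

Definition dark (D : diagram) : seq cell :=
  foldl (dark_step D) [::] (rev (iota 1 (maxrow D))).

Definition snowflakes (D : diagram) : seq cell :=
  flatten [seq [seq (r', p.2) | r' <- iota 1 p.1.-1 & (r', p.2) \notin D] | p <- dark D].

(* underlying diagram (labels ignored) of snow(D) *)
Definition snow (D : diagram) : seq cell := D ++ snowflakes D.

Definition rajcode (D : diagram) (i : nat) : nat :=
  count (fun p : cell => p.1 == i) (undup (snow D)).

From mathcomp Require Import all_boot zify.
Set Implicit Arguments. Unset Strict Implicit. Unset Printing Implicit Defensive.

(* When row r of D(alpha) is processed, its dark cloud goes to the largest
   column c_r <= alpha_r that is not among the columns U_r of the dark clouds
   of the lower rows (c_r = 0 meaning no cloud), so row r of snow(D(alpha)) is
   U_r together with [1, c_r].  As c_r lies outside U_r, the size of that row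
   is strictly increasing in c_r for fixed U_r; going up from the bottom row,
   the rajcode therefore determines every c_r, and the dark clouds determine
   the snow diagram row by row. *)

Lemma mem_Dcomp alpha r c :
  ((r, c) \in Dcomp alpha) = [&& 0 < r, 0 < c & c <= nth 0 alpha r.-1].
Proof.
apply/flatten_mapP/and3P => [[r' + /mapP [c' + [-> ->]]] | [r0 c0 le_c]].
  by rewrite !mem_iota => ? ?; split; lia.
exists r; last by apply/mapP; exists c; rewrite // mem_iota; lia.
rewrite mem_iota r0 /=; case: (ltnP r.-1 (size alpha)) => [|le_size]; first lia.
by move: le_c; rewrite nth_default //; lia.
Qed.

Definition max_free (s : seq nat) (a : nat) : nat :=
  \max_(c <- iota 1 a | c \notin s) c.

Lemma max_free_le s a : max_free s a <= a.
Proof. by apply/bigmax_leqP_seq => c; rewrite mem_iota; lia. Qed.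

Lemma leq_max_free s a c : 0 < c <= a -> c \notin s -> c <= max_free s a.
Proof. by move=> c_in; apply: (leq_bigmax_seq (F := id)); rewrite mem_iota; lia. Qed.

Lemma max_free_notin s a : (max_free s a == 0) || (max_free s a \notin s).
Proof.
rewrite /max_free; elim/big_ind: _ => [//|m1 m2 P1 P2|c c_notin]; last by rewrite c_notin orbT.
by case: (leqP m1 m2).
Qed.

Lemma max_free_prefix s a c :
  (c \in s) || (0 < c <= max_free s a) = (c \in s) || (0 < c <= a).
Proof.
case: (boolP (c \in s)) => //= c_notin; apply/idP/idP => [|c_le].
  by have := max_free_le s a; lia.
by rewrite (leq_max_free c_le c_notin) andbT; case/andP: c_le.
Qed.

Lemma count_sub_lt (T : eqType) (a1 a2 : pred T) s x :
  subpred a1 a2 -> x \in s -> a2 x -> ~~ a1 x -> count a1 s < count a2 s.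
Proof.
move=> sub12; elim: s => //= y s IH; rewrite in_cons => /predU1P [<- | x_in] a2x a1x.
  by rewrite a2x (negbTE a1x) add0n add1n ltnS sub_count.
have := IH x_in a2x a1x; have := @sub12 y; case: (a1 y); case: (a2 y) => //=; lia.
Qed.

Lemma count_prefix_lt (s : seq nat) N t1 t2 :
  t1 < t2 <= N -> t2 \notin s ->
  count (fun c => (c \in s) || (0 < c <= t1)) (iota 0 N.+1)
    < count (fun c => (c \in s) || (0 < c <= t2)) (iota 0 N.+1).
Proof.
move=> lt_t t2_notin; apply: (@count_sub_lt _ _ _ _ t2).
- by move=> c /orP [-> // | c_le]; apply/orP; right; lia.
- by rewrite mem_iota; lia.
- by apply/orP; right; lia.
- by rewrite negb_or t2_notin /=; lia.
Qed.

Lemma count_prefix_inj (s : seq nat) N t1 t2 :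
  t1 <= N -> t2 <= N -> (t1 == 0) || (t1 \notin s) -> (t2 == 0) || (t2 \notin s) ->
  count (fun c => (c \in s) || (0 < c <= t1)) (iota 0 N.+1)
    = count (fun c => (c \in s) || (0 < c <= t2)) (iota 0 N.+1) ->
  t1 = t2.
Proof.
move=> t1N t2N free1 free2 eq_count.
wlog lt12 : t1 t2 t1N t2N free1 free2 eq_count / t1 < t2.
  by move=> W; case: (ltngtP t1 t2) => // lt; [exact: W | exact/esym/W].
suff: count (fun c => (c \in s) || (0 < c <= t1)) (iota 0 N.+1)
        < count (fun c => (c \in s) || (0 < c <= t2)) (iota 0 N.+1).
  by rewrite eq_count ltnn.
apply: count_prefix_lt; first lia.
by case/orP: free2 => // /eqP t2_0; rewrite t2_0 in lt12.
Qed.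

Lemma dark_step_Dcomp alpha dk r : 0 < r ->
  dark_step (Dcomp alpha) dk r =
    if max_free [seq q.2 | q <- dk] (nth 0 alpha r.-1) == 0 then dk
    else (r, max_free [seq q.2 | q <- dk] (nth 0 alpha r.-1)) :: dk.
Proof.
move=> r0; rewrite /dark_step.
set cols := [seq q.2 | q <- dk]; set a := nth 0 alpha r.-1.
set cands := [seq p.2 | p <- _ & _].
have cands_free : cands =i [seq c <- iota 1 a | c \notin cols].
  move=> c; rewrite mem_filter mem_iota; apply/mapP/idP => [[[r' c']] | c_free].
    rewrite mem_filter mem_Dcomp /= => /andP [/andP [/eqP -> c'_notin]] /and3P [_ ? ?] ->.
    by rewrite c'_notin /a /=; lia.
  exists (r, c); rewrite // mem_filter mem_Dcomp /= eqxx r0.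
  by case/andP: c_free => -> ?; apply/and3P; split => //; lia.
have -> : max_free cols a = \max_(c <- cands) c.
  rewrite /max_free -big_filter; apply: eq_big_idem => [x | c]; first exact: maxnn.
  by rewrite cands_free.
clearbody cands.
case: cands cands_free => [|c cands] cands_free; first by rewrite big_nil.
have : 0 < c by move: (cands_free c); rewrite mem_head mem_filter mem_iota; lia.
have : c <= \max_(c' <- c :: cands) c' by apply: (leq_bigmax_seq (F := id)); rewrite ?mem_head.
by case: eqP => // ->; lia.
Qed.

Lemma dark_step_sub D dk r : {subset dk <= dark_step D dk r}.
Proof.
rewrite /dark_step; case: [seq _ | _ <- _ & _] => // c cands q q_in.
by rewrite in_cons q_in orbT.
Qed.

Lemma dark_step_row D dk r q : q \in dark_step D dk r -> (q \in dk) || (q.1 == r).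
Proof.
rewrite /dark_step; case: [seq _ | _ <- _ & _] => [-> //| c cands].
by rewrite in_cons => /predU1P [-> | ->]; rewrite ?eqxx ?orbT.
Qed.

Lemma mem_foldl_dark_step D dk s q :
  q \in foldl (dark_step D) dk s -> (q \in dk) || (q.1 \in s).
Proof.
elim: s dk => [dk -> // | r s IH dk /= /IH /orP [/dark_step_row /orP [-> // | /eqP <-] | ]].
  by rewrite mem_head orbT.
by rewrite in_cons => ->; rewrite !orbT.
Qed.

Lemma leq_maxrow (D : diagram) q : q \in D -> q.1 <= maxrow D.
Proof. by move=> q_in; apply: (@leq_bigmax_seq _ D predT (fun p : cell => p.1)). Qed.

Definition dark_below (D : diagram) (r : nat) : seq cell :=
  foldl (dark_step D) [::] (rev (iota r.+1 (maxrow D - r))).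

Definition cols_below (D : diagram) (r : nat) : seq nat :=
  [seq q.2 | q <- dark_below D r].

Lemma dark_below0 D : dark_below D 0 = dark D.
Proof. by rewrite /dark_below subn0. Qed.

Lemma dark_below_row D r q : q \in dark_below D r -> r < q.1.
Proof. by move/mem_foldl_dark_step; rewrite in_nil mem_rev mem_iota /=; lia. Qed.

Lemma dark_below_max D r : maxrow D <= r -> dark_below D r = [::].
Proof. by move=> le_max; rewrite /dark_below; have -> : maxrow D - r = 0 by lia. Qed.

Lemma dark_below_succ D r : dark_below D r = dark_step D (dark_below D r.+1) r.+1.
Proof.
case: (ltnP r (maxrow D)) => [lt_max | le_max].
  rewrite /dark_below; have -> : maxrow D - r = (maxrow D - r.+1).+1 by lia.
  by rewrite /= rev_cons foldl_rcons.
rewrite !dark_below_max ?(leqW le_max) // /dark_step.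
rewrite (@eq_in_filter _ _ pred0) ?filter_pred0 // => p /leq_maxrow p_row.
by apply/negbTE/negP => /andP [/eqP p_r _]; lia.
Qed.

Lemma mem_dark_below D r q : (q \in dark_below D r) = (q \in dark D) && (r < q.1).
Proof.
elim: r => [|r IH].
  rewrite -dark_below0; apply/idP/andP => [q_in | [] //].
  by split; last exact: dark_below_row q_in.
move: IH; rewrite dark_below_succ => IH; apply/idP/andP => [q_in | [q_dark lt_q]].
  have := dark_below_row q_in; have := @dark_step_sub D _ r.+1 _ q_in.
  by rewrite IH => /andP [].
have : q \in dark_step D (dark_below D r.+1) r.+1 by rewrite IH q_dark; lia.
by case/dark_step_row/orP => // /eqP; lia.
Qed.

(* [dark_col alpha r = 0] when row [r] of [D(alpha)] has no dark cloud. *)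
Definition dark_col (alpha : seq nat) (r : nat) : nat :=
  max_free (cols_below (Dcomp alpha) r) (nth 0 alpha r.-1).

Lemma dark_below_Dcomp alpha r :
  dark_below (Dcomp alpha) r =
    if dark_col alpha r.+1 == 0 then dark_below (Dcomp alpha) r.+1
    else (r.+1, dark_col alpha r.+1) :: dark_below (Dcomp alpha) r.+1.
Proof. by rewrite dark_below_succ dark_step_Dcomp. Qed.

Lemma mem_dark_Dcomp alpha r c :
  ((r, c) \in dark (Dcomp alpha)) = [&& 0 < r, 0 < c & c == dark_col alpha r].
Proof.
case: (posnP r) => [-> | r0].
  by apply/negbTE/negP; rewrite -dark_below0 => /dark_below_row.
have -> : ((r, c) \in dark (Dcomp alpha)) = ((r, c) \in dark_below (Dcomp alpha) r.-1).
  by rewrite mem_dark_below /=; case: (_ \in _) => //=; lia.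
rewrite dark_below_Dcomp prednK //.
have r_new : (r, c) \notin dark_below (Dcomp alpha) r.
  by apply/negP => /dark_below_row /=; lia.
case: eqP => [-> | /eqP t_neq0]; rewrite ?in_cons (negbTE r_new) ?orbF /=.
  by case: (posnP c).
by rewrite xpair_eqE eqxx /=; case: eqP => [-> | _]; rewrite ?andbF // lt0n t_neq0.
Qed.

Lemma mem_snow D r c :
  ((r, c) \in snow D) = ((r, c) \in D) || (0 < r) && (c \in cols_below D r).
Proof.
rewrite mem_cat; case: (boolP ((r, c) \in D)) => //= rc_notin.
apply/flatten_mapP/andP => [[p p_dark /mapP [r']] | [r0 /mapP [p]]].
  rewrite mem_filter mem_iota => /andP [_ r'_row] [-> ->]; split; first lia.
  by apply/mapP; exists p; rewrite // mem_dark_below p_dark; move: r'_row; case: p.1; lia.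
rewrite mem_dark_below => /andP [p_dark r_row] c_eq; exists p => //.
apply/mapP; exists r; last by rewrite c_eq.
rewrite mem_filter -c_eq rc_notin mem_iota /=.
by move: r0 r_row; case: p.1; lia.
Qed.

Lemma mem_snow_Dcomp alpha r c :
  ((r, c) \in snow (Dcomp alpha)) =
    (0 < r) && ((c \in cols_below (Dcomp alpha) r) || (0 < c <= dark_col alpha r)).
Proof.
rewrite mem_snow mem_Dcomp /dark_col max_free_prefix.
by case: (posnP r) => //= _; rewrite orbC.
Qed.

Lemma dark_col_free alpha r :
  (dark_col alpha r == 0) || (dark_col alpha r \notin cols_below (Dcomp alpha) r).
Proof. exact: max_free_notin. Qed.

Lemma rajcode_count D i N : {in snow D, forall q, q.2 <= N} ->
  rajcode D i = count (fun c => (i, c) \in snow D) (iota 0 N.+1).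
Proof.
move=> snow_le; rewrite /rajcode -!size_filter -[RHS](size_map (pair i)).
apply: perm_size; apply: uniq_perm; first exact/filter_uniq/undup_uniq.
  by rewrite map_inj_uniq ?filter_uniq ?iota_uniq // => x y [].
case=> r c; rewrite mem_filter mem_undup; apply/andP/mapP => [[r_i rc_in] | [c']].
  have r_eq : r = i := eqP r_i; subst r.
  by exists c; rewrite // mem_filter rc_in mem_iota add0n ltnS (snow_le _ rc_in).
by rewrite mem_filter => /andP [rc_in _] [-> ->]; rewrite eqxx.
Qed.

Section SnowBound.
Variables (alpha : seq nat) (N : nat).
Hypothesis snow_le : {in snow (Dcomp alpha), forall q, q.2 <= N}.

Lemma dark_col_le r : 0 < r -> dark_col alpha r <= N.
Proof.
case: (posnP (dark_col alpha r)) => [-> // | t_pos] r0.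
by apply: (@snow_le (r, _)); rewrite mem_snow_Dcomp r0 t_pos leqnn orbT.
Qed.

Lemma rajcode_Dcomp r : 0 < r ->
  rajcode (Dcomp alpha) r
    = count (fun c => (c \in cols_below (Dcomp alpha) r) || (0 < c <= dark_col alpha r))
            (iota 0 N.+1).
Proof.
move=> r0; rewrite (rajcode_count _ snow_le).
by apply: eq_count => c; rewrite mem_snow_Dcomp r0.
Qed.

End SnowBound.

Lemma dark_below_eq_pred alpha gamma N r :
  {in snow (Dcomp alpha), forall q, q.2 <= N} -> {in snow (Dcomp gamma), forall q, q.2 <= N} ->
  rajcode (Dcomp alpha) r.+1 = rajcode (Dcomp gamma) r.+1 ->
  dark_below (Dcomp alpha) r.+1 =i dark_below (Dcomp gamma) r.+1 ->
  dark_below (Dcomp alpha) r =i dark_below (Dcomp gamma) r.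
Proof.
move=> le_alpha le_gamma eq_raj eq_below.
have eq_cols : cols_below (Dcomp alpha) r.+1 =i cols_below (Dcomp gamma) r.+1.
  exact: eq_mem_map.
have eq_col : dark_col alpha r.+1 = dark_col gamma r.+1.
  apply: (@count_prefix_inj (cols_below (Dcomp alpha) r.+1) N).
  - exact: dark_col_le.
  - exact: dark_col_le.
  - exact: dark_col_free.
  - by rewrite eq_cols; exact: dark_col_free.
  move: eq_raj; rewrite (rajcode_Dcomp le_alpha) // (rajcode_Dcomp le_gamma) // => eq_counts.
  apply: (etrans eq_counts); apply: eq_count => c; congr (_ || _); exact/esym/eq_cols.
move=> q; rewrite (dark_below_Dcomp alpha r) (dark_below_Dcomp gamma r) eq_col.
by case: (_ == 0); rewrite ?in_cons eq_below.
Qed.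

Lemma dark_eq_of_rajcode alpha gamma :
  (forall i, rajcode (Dcomp alpha) i = rajcode (Dcomp gamma) i) ->
  dark (Dcomp alpha) =i dark (Dcomp gamma).
Proof.
move=> eq_raj; set N := \max_(q <- snow (Dcomp alpha) ++ snow (Dcomp gamma)) q.2.
have le_N q : q \in snow (Dcomp alpha) ++ snow (Dcomp gamma) -> q.2 <= N.
  by move=> q_in; apply: (@leq_bigmax_seq _ _ predT (fun p : cell => p.2)).
set B := maxn (maxrow (Dcomp alpha)) (maxrow (Dcomp gamma)).
suff below_eq k r : B <= r + k -> dark_below (Dcomp alpha) r =i dark_below (Dcomp gamma) r.
  by move=> q; rewrite -!dark_below0; apply: (below_eq B).
elim: k r => [|k IH] r le_B.
  by move: le_B; rewrite addn0 geq_max => /andP [? ?]; rewrite !dark_below_max.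
apply: (@dark_below_eq_pred _ _ N) => // [q q_in | q q_in |].
- by apply: le_N; rewrite mem_cat q_in.
- by apply: le_N; rewrite mem_cat q_in orbT.
- by apply: IH; rewrite addSnnS.
Qed.

Lemma snow_eq_of_dark alpha gamma :
  dark (Dcomp alpha) =i dark (Dcomp gamma) -> snow (Dcomp alpha) =i snow (Dcomp gamma).
Proof.
move=> eq_dark; have eq_cols r : cols_below (Dcomp alpha) r =i cols_below (Dcomp gamma) r.
  by apply: eq_mem_map => q; rewrite !mem_dark_below eq_dark.
have eq_col r : 0 < r -> dark_col alpha r = dark_col gamma r.
  move=> r0; have eq_row c :
      (0 < c) && (c == dark_col alpha r) = (0 < c) && (c == dark_col gamma r).
    by have := eq_dark (r, c); rewrite !mem_dark_Dcomp r0.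
  have := eq_row (dark_col alpha r); have := eq_row (dark_col gamma r); rewrite !eqxx; lia.
case=> r c; rewrite !mem_snow_Dcomp eq_cols.
by case: (posnP r) => // r0; rewrite eq_col.
Qed.

Theorem proposition4p16 (alpha gamma : seq nat) :
  [<-> (forall i, rajcode (Dcomp alpha) i = rajcode (Dcomp gamma) i);
       dark (Dcomp alpha) =i dark (Dcomp gamma);
       snow (Dcomp alpha) =i snow (Dcomp gamma)].
Proof.
tfae => [eq_raj | eq_dark | eq_snow].
- exact: dark_eq_of_rajcode.
- exact: snow_eq_of_dark.
- by move=> i; apply: eq_count_undup => q _; exact: eq_snow.
Qed.
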